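(* Let $n\geq 2$ and let $\Phi:\mathfrak{B}([n])\to \mathbf{Gpd}$ be a covariant strict 2-functor (equivalently, a functor from the poset $\mathfrak{B}([n])$ to the category of small groupoids). Suppose: (A1) for every integer $1\leq k\leq n-1$, the condition $A^{[k]}_\emptyset$ holds, i.e. the canonical functor $\operatorname{colim}_{\mathfrak{B}([k])}\Phi\to \Phi([k])$ is injective on objects; (A2) for every integer $1\leq k\leq n-2$ and every subset $U\subseteq\{k+2,\dots,n\}$, the condition $A^V_U$ holds, where $V=[k]\sqcup U$, i.e. the canonical functor $\operatorname{colim}_{\mathfrak{B}(V:U)}\Phi\to \Phi(V)$ is injective on objects. Then the comparison functor $\delta:\operatorname{2colim}_{\mathfrak{B}([n])}\Phi\to \operatorname{colim}_{\mathfrak{B}([n])}\Phi$ is an equivalence of categories.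
   Context: For $n\ge1$, $[n]=\{1,\dots,n\}$. For a finite set $V$, $\mathfrak{B}(V)$ is the poset (ordered by inclusion, regarded as a category) of all proper subsets of $V$; for a proper subset $U\subsetneq V$, $\mathfrak{B}(V:U)=\{X: U\subseteq X\subsetneq V\}$. For $k<n$, $\mathfrak{B}([k])$ is regarded as a subposet of $\mathfrak{B}([n])$, and for $U\subseteq V\subseteq[n]$ with $V\neq[n]$, $\mathfrak{B}(V:U)$ is regarded as a subposet of $\mathfrak{B}([n])$; colimits over these subposets are of the restriction of $\Phi$. For $S\subseteq T$ write $\Phi_{S,T}:\Phi(S)\to\Phi(T)$ for the induced functor. $\mathbf{Gpd}$ is the 2-category of small groupoids, functors and natural transformations. A functor is injective on objects if its map on object sets is injective. The colimit $\operatorname{colim}\Phi$ is the ordinary colimit in the category of small groupoids (it represents $\mathcal G\mapsto\lim_i\operatorname{Hom}(\Phi(i),\mathcal G)$); the canonical functor $\operatorname{colim}_{\mathfrak{B}(V:U)}\Phi\to\Phi(V)$ is induced by the functors $\Phi_{X,V}$. The 2-colimit $\operatorname{2colim}\Phi$ is a groupoid $\mathcal C$ with an equivalence $\operatorname{Hom}_{\mathbf{Gpd}}(\mathcal C,\mathcal G)\simeq \operatorname{2lim}_i\operatorname{Hom}_{\mathbf{Gpd}}(\Phi(i),\mathcal G)$ natural in groupoids $\mathcal G$, where for a functor $\Psi:I^{op}\to\mathbf{Gpd}$ on a poset $I$, $\operatorname{2lim}\Psi$ has objects $(x_i,\xi_{ij})$ with $x_i\in\Psi(i)$ and isomorphisms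 $\xi_{ij}:\Psi_{ij}(x_j)\to x_i$ ($i\le j$) satisfying $\xi_{ik}=\xi_{ij}\circ\Psi_{ij}(\xi_{jk})$ for $i\le j\le k$, and morphisms families $f_i:x_i\to y_i$ with $f_i\circ\xi_{ij}=\eta_{ij}\circ\Psi_{ij}(f_j)$. Concretely, $\operatorname{2colim}\Phi$ is the groupoid obtained from the Grothendieck construction $\int_I\Phi$ (objects $(i,x)$ with $x\in\Phi(i)$; morphisms $(i,x)\to(j,y)$ for $i\le j$ are morphisms $\Phi_{i,j}(x)\to y$ in $\Phi(j)$) by inverting all morphisms. The comparison functor $\delta$ is the functor corresponding (via these universal properties) to the fully faithful functor $\lim\operatorname{Hom}(\Phi,\mathcal G)\to\operatorname{2lim}\operatorname{Hom}(\Phi,\mathcal G)$, $(x_i)\mapsto(x_i,\mathrm{id})$; concretely it sends $(i,x)$ to the image of $x$ under $\Phi(i)\to\operatorname{colim}\Phi$. *)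

From HB Require Import structures.
From mathcomp Require Import all_boot.
From Stdlib Require Import Relations.Relation_Operators.
From Stdlib Require Import ProofIrrelevance FunctionalExtensionality PropExtensionality IndefiniteDescription.

Set Implicit Arguments. Unset Strict Implicit. Unset Printing Implicit Defensive.

(* Small groupoids.  Morphisms carry a setoid equality [geq] (the equality of *)
(* morphisms of the groupoid); composition is written in diagrammatic order:  *)
(* [gcomp f g] is "first f, then g".                                          *)
Record Gpd := Gpd_ {
  ob :> Type;
  hom : ob -> ob -> Type;
  geq : forall x y : ob, hom x y -> hom x y -> Prop;
  gid : forall x : ob, hom x x;
  gcomp : forall x y z : ob, hom x y -> hom y z -> hom x z;
  ginv : forall x y : ob, hom x y -> hom y x;
  geq_refl : forall x y (f : hom x y), geq f f;
  geq_sym : forall x y (f g : hom x y), geq f g -> geq g f;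
  geq_trans : forall x y (f g h : hom x y), geq f g -> geq g h -> geq f h;
  gcomp_geq : forall x y z (f f' : hom x y) (g g' : hom y z),
      geq f f' -> geq g g' -> geq (gcomp f g) (gcomp f' g');
  ginv_geq : forall x y (f f' : hom x y), geq f f' -> geq (ginv f) (ginv f');
  gcompA : forall x y z w (f : hom x y) (g : hom y z) (h : hom z w),
      geq (gcomp f (gcomp g h)) (gcomp (gcomp f g) h);
  gid_l : forall x y (f : hom x y), geq (gcomp (gid x) f) f;
  gid_r : forall x y (f : hom x y), geq (gcomp f (gid y)) f;
  ginv_r : forall x y (f : hom x y), geq (gcomp f (ginv f)) (gid x);
  ginv_l : forall x y (f : hom x y), geq (gcomp (ginv f) f) (gid y)
}.


Record Functor (G H : Gpd) := Functor_ {
  fobj :> G -> H;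
  fmor : forall x y : G, hom x y -> hom (fobj x) (fobj y);
  fmor_geq : forall x y (f g : hom x y), geq f g -> geq (fmor f) (fmor g);
  fmor_id : forall x : G, geq (fmor (gid x)) (gid (fobj x));
  fmor_comp : forall x y z (f : hom x y) (g : hom y z),
      geq (fmor (gcomp f g)) (gcomp (fmor f) (fmor g))
}.
Arguments fmor {G H} _ {x y}.

Definition Fid (G : Gpd) : Functor G G :=
  @Functor_ G G (fun x => x) (fun x y f => f) (fun x y f g h => h)
    (fun x => geq_refl (gid x)) (fun x y z f g => geq_refl (gcomp f g)).

Definition Fcomp (A B C : Gpd) (F : Functor A B) (F' : Functor B C) : Functor A C.
Proof.
refine (@Functor_ A C (fun x => F' (F x)) (fun x y f => fmor F' (fmor F f)) _ _ _).
- by move=> x y f g h; apply: fmor_geq; apply: fmor_geq.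
- move=> x; apply: geq_trans (fmor_id F' (F x)).
  by apply: fmor_geq; apply: fmor_id.
- move=> x y z f g; apply: geq_trans (fmor_comp F' _ _).
  by apply: fmor_geq; apply: fmor_comp.
Defined.

(* Natural isomorphism (every natural transformation between functors into a *)
(* groupoid is a natural isomorphism).                                        *)
Definition NatIso (A B : Gpd) (F F' : Functor A B) : Prop :=
  exists eta : forall x : A, hom (F x) (F' x),
    forall (x y : A) (f : hom x y),
      geq (gcomp (fmor F f) (eta y)) (gcomp (eta x) (fmor F' f)).

Definition IsEquivalence (A B : Gpd) (F : Functor A B) : Prop :=
  exists G : Functor B A,
    NatIso (Fcomp F G) (Fid A) /\ NatIso (Fcomp G F) (Fid B).

Definition htransport (G : Gpd) (x x' y y' : G) (ex : x = x') (ey : y = y')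
  (f : hom x y) : hom x' y' :=
  match ex in _ = a return hom a y' with
  | erefl => match ey in _ = b return hom x b with erefl => f end end.

(* A (strict) functor from a poset (I, le) to groupoids: functors Phi_{i,j}   *)
(* for i <= j with Phi_{i,i} = Id and Phi_{j,k} o Phi_{i,j} = Phi_{i,k}       *)
(* holding on the nose (objects equal, morphisms equal after transport).      *)
Record Diagram (I : Type) (le : I -> I -> bool) := Diagram_ {
  dob :> I -> Gpd;
  dmap : forall i j, le i j -> Functor (dob i) (dob j);
  dmap_id_ob : forall i (h : le i i) (x : dob i), dmap h x = x;
  dmap_id_mor : forall i (h : le i i) (x y : dob i) (f : hom x y),
      geq (htransport (dmap_id_ob h x) (dmap_id_ob h y) (fmor (dmap h) f)) f;
  dmap_comp_ob : forall i j k (hij : le i j) (hjk : le j k) (hik : le i k) (x : dob i),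
      dmap hjk (dmap hij x) = dmap hik x;
  dmap_comp_mor : forall i j k (hij : le i j) (hjk : le j k) (hik : le i k)
      (x y : dob i) (f : hom x y),
      geq (htransport (dmap_comp_ob hij hjk hik x) (dmap_comp_ob hij hjk hik y)
             (fmor (dmap hjk) (fmor (dmap hij) f)))
          (fmor (dmap hik) f)
}.
Arguments dmap {I le} _ {i j}.

Definition quot (X : Type) (R : X -> X -> Prop) :=
  {P : X -> Prop | exists x, P = clos_refl_sym_trans X R x}.
Definition qcls (X : Type) (R : X -> X -> Prop) (x : X) : quot R :=
  exist _ (clos_refl_sym_trans X R x) (ex_intro _ x erefl).
Arguments qcls {X} R x.

Lemma qcls_eq (X : Type) (R : X -> X -> Prop) (x y : X) :
  clos_refl_sym_trans X R x y -> qcls R x = qcls R y.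
Proof.
move=> Hxy.
have E : clos_refl_sym_trans X R x = clos_refl_sym_trans X R y.
  apply: functional_extensionality => z; apply: propositional_extensionality; split.
  - by move=> H; apply: rst_trans H; apply: rst_sym.
  - by move=> H; apply: rst_trans H.
rewrite /qcls; move: (ex_intro _ x _) (ex_intro _ y _); rewrite E => p1 p2.
by rewrite (proof_irrelevance _ p1 p2).
Qed.

Lemma qcls_inv (X : Type) (R : X -> X -> Prop) (x y : X) :
  qcls R x = qcls R y -> clos_refl_sym_trans X R x y.
Proof.
move=> /(f_equal (@proj1_sig _ _)) /= E.
by rewrite E; apply: rst_refl.
Qed.

(* Groupoids presented by generators (letters with formal source/target and  *)
(* a chosen inverse letter) and relations; morphisms are composable words.   *)
Section Presented.
Variables (O L : Type) (src tgt : L -> O) (linv : L -> L).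
Hypotheses (src_linv : forall l, src (linv l) = tgt l)
           (tgt_linv : forall l, tgt (linv l) = src l).
Variable B : seq L -> seq L -> Prop.

Definition winv (w : seq L) : seq L := rev (map linv w).

Inductive brel : seq L -> seq L -> Prop :=
| br_base l r : B l r -> brel l r
| br_inv l r : brel l r -> brel (winv l) (winv r).

Inductive wstep : seq L -> seq L -> Prop :=
| ws_rel u l r v : brel l r -> wstep (u ++ l ++ v) (u ++ r ++ v)
| ws_cancel_r u a v : wstep (u ++ [:: a; linv a] ++ v) (u ++ v)
| ws_cancel_l u a v : wstep (u ++ [:: linv a; a] ++ v) (u ++ v).

Definition weq := clos_refl_sym_trans _ wstep.

Fixpoint wf (a : O) (w : seq L) (b : O) : Prop :=
  match w with
  | [::] => a = b
  | l :: w' => a = src l /\ wf (tgt l) w' b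
  end.

Lemma winv_cat u v : winv (u ++ v) = winv v ++ winv u.
Proof. by rewrite /winv map_cat rev_cat. Qed.

Lemma winv_cons l w : winv (l :: w) = winv w ++ [:: linv l].
Proof. by rewrite /winv /= rev_cons cats1. Qed.

Lemma winv2 a b : winv [:: a; b] = [:: linv b; linv a].
Proof. by rewrite /winv /rev /=. Qed.

Lemma wf_cat a b c u v : wf a u b -> wf b v c -> wf a (u ++ v) c.
Proof.
elim: u a => [|l u IH] a /=; first by move=> ->.
by case=> -> H1 H2; split=> //; apply: IH H1 H2.
Qed.

Lemma wf_inv a b w : wf a w b -> wf b (winv w) a.
Proof.
elim: w a => [|l w IH] a /=; first by move=> ->.
case=> -> H; rewrite winv_cons; apply: wf_cat (IH _ H) _ => /=.
by rewrite src_linv tgt_linv.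
Qed.

Lemma wstep_catl s x y : wstep x y -> wstep (s ++ x) (s ++ y).
Proof.
case=> [u l r v H|u a v|u a v]; rewrite !(catA s u).
- exact: ws_rel.
- exact: ws_cancel_r.
- exact: ws_cancel_l.
Qed.

Lemma wstep_catr s x y : wstep x y -> wstep (x ++ s) (y ++ s).
Proof.
case=> [u l r v H|u a v|u a v]; rewrite -!catA.
- exact: ws_rel.
- exact: (ws_cancel_r u a (v ++ s)).
- exact: (ws_cancel_l u a (v ++ s)).
Qed.

Lemma weq_catl s x y : weq x y -> weq (s ++ x) (s ++ y).
Proof.
elim=> [a b H|a|a b _ IH|a b c _ IH1 _ IH2].
- by apply: rst_step; apply: wstep_catl.
- exact: rst_refl.
- exact: rst_sym.
- exact: rst_trans IH1 IH2.
Qed.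

Lemma weq_catr s x y : weq x y -> weq (x ++ s) (y ++ s).
Proof.
elim=> [a b H|a|a b _ IH|a b c _ IH1 _ IH2].
- by apply: rst_step; apply: wstep_catr.
- exact: rst_refl.
- exact: rst_sym.
- exact: rst_trans IH1 IH2.
Qed.

Lemma weq_cat x x' y y' : weq x x' -> weq y y' -> weq (x ++ y) (x' ++ y').
Proof.
move=> H1 H2; apply: rst_trans (weq_catr _ H1) _; exact: weq_catl.
Qed.

Lemma weq_inv x y : weq x y -> weq (winv x) (winv y).
Proof.
elim=> [a b H|a|a b _ IH|a b c _ IH1 _ IH2].
- apply: rst_step; case: H => [u l r v H|u a' v|u a' v];
    rewrite !winv_cat ?winv2 -!catA.
  + by apply: ws_rel; apply: br_inv.
  + exact: (ws_cancel_l (winv v) (linv a') (winv u)).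
  + exact: (ws_cancel_r (winv v) (linv a') (winv u)).
- exact: rst_refl.
- exact: rst_sym.
- exact: rst_trans IH1 IH2.
Qed.

Lemma weq_invr w : weq (w ++ winv w) [::].
Proof.
elim: w => [|l w IH]; first exact: rst_refl.
rewrite winv_cons.
apply: (rst_trans _ _ _ ([:: l] ++ [::] ++ [:: linv l])).
  have := weq_catl [:: l] (weq_catr [:: linv l] IH).
  by rewrite /= -catA.
exact: (rst_step _ _ _ _ (ws_cancel_r [::] l [::])).
Qed.

Lemma weq_invl w : weq (winv w ++ w) [::].
Proof.
elim: w => [|l w IH]; first exact: rst_refl.
rewrite winv_cons -catA.
apply: rst_trans IH.
exact: (rst_step _ _ _ _ (ws_cancel_l (winv w) l w)).
Qed.

Definition PGpd : Gpd.
Proof.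
refine (@Gpd_ O (fun a b => {w : seq L | wf a w b})
   (fun a b f g => weq (sval f) (sval g))
   (fun a => exist _ [::] (erefl a))
   (fun a b c f g => exist _ (sval f ++ sval g) (wf_cat (proj2_sig f) (proj2_sig g)))
   (fun a b f => exist _ (winv (sval f)) (wf_inv (proj2_sig f)))
   _ _ _ _ _ _ _ _ _ _).
- by move=> *; apply: rst_refl.
- by move=> *; apply: rst_sym.
- by move=> ? ? ? ? ?; apply: rst_trans.
- by move=> ? ? ? ? ? ? ? /=; apply: weq_cat.
- by move=> ? ? ? ? /=; apply: weq_inv.
- by move=> ? ? ? ? f g h /=; rewrite catA; apply: rst_refl.
- by move=> ? ? f /=; apply: rst_refl.
- by move=> ? ? f /=; rewrite cats0; apply: rst_refl.
- by move=> ? ? f /=; apply: weq_invr.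
- by move=> ? ? f /=; apply: weq_invl.
Defined.

End Presented.

Lemma ginvK (G : Gpd) (x y : G) (f : hom x y) : geq (ginv (ginv f)) f.
Proof.
set g := ginv f.
apply: geq_trans (geq_sym (gid_l (ginv g))) _.
apply: geq_trans (gcomp_geq (geq_sym (ginv_r f)) (geq_refl (ginv g))) _.
apply: geq_trans (geq_sym (gcompA f g (ginv g))) _.
apply: geq_trans (gcomp_geq (geq_refl f) (ginv_r g)) _.
exact: gid_r.
Qed.

Lemma weq_B (L : Type) (linv : L -> L) (B : seq L -> seq L -> Prop) l r :
  B l r -> weq linv B l r.
Proof.
move=> H; have := @ws_rel L linv B [::] l r [::] (br_base linv H).
by rewrite /= !cats0 => H'; apply: rst_step.
Qed.

Section PresMap.
Variables (O1 L1 O2 L2 : Type) (src1 tgt1 : L1 -> O1) (linv1 : L1 -> L1)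
  (B1 : seq L1 -> seq L1 -> Prop)
  (src2 tgt2 : L2 -> O2) (linv2 : L2 -> L2) (B2 : seq L2 -> seq L2 -> Prop)
  (fo : O1 -> O2) (fl : L1 -> L2).

Lemma wf_map :
  (forall l, fo (src1 l) = src2 (fl l)) -> (forall l, fo (tgt1 l) = tgt2 (fl l)) ->
  forall a w b, wf src1 tgt1 a w b -> wf src2 tgt2 (fo a) (map fl w) (fo b).
Proof.
move=> Hs Ht a w; elim: w a => [|l w IH] a b /=; first by move=> ->.
by case=> -> H; split; [apply: Hs | rewrite -Ht; apply: IH].
Qed.

Lemma weq_map :
  (forall l r, B1 l r -> weq linv2 B2 (map fl l) (map fl r)) ->
  (forall l, weq linv2 B2 [:: fl (linv1 l)] [:: linv2 (fl l)]) ->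
  (forall a, weq linv2 B2 (map fl [:: a; linv1 a]) [::]) ->
  (forall a, weq linv2 B2 (map fl [:: linv1 a; a]) [::]) ->
  forall u v, weq linv1 B1 u v -> weq linv2 B2 (map fl u) (map fl v).
Proof.
move=> HB Hinv Hcr Hcl.
have Hw : forall w, weq linv2 B2 (map fl (winv linv1 w)) (winv linv2 (map fl w)).
  elim=> [|l w IH]; first exact: rst_refl.
  rewrite /= !winv_cons map_cat; exact: weq_cat IH (Hinv l).
have Hbr : forall l r, brel linv1 B1 l r -> weq linv2 B2 (map fl l) (map fl r).
  move=> l r; elim=> [l' r' H|l' r' _ IH]; first exact: HB.
  apply: rst_trans (Hw _) _; apply: rst_trans (weq_inv IH) _.
  exact: rst_sym (Hw _).
move=> u v; elim=> [a b H|a|a b _ IH|a b c _ IH1 _ IH2].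
- case: H => [u' l r v' H|u' a' v'|u' a' v']; rewrite !map_cat.
  + by apply: weq_catl; apply: weq_catr; apply: Hbr.
  + by apply: weq_catl; apply: (weq_catr _ (Hcr a')).
  + by apply: weq_catl; apply: (weq_catr _ (Hcl a')).
- exact: rst_refl.
- exact: rst_sym.
- exact: rst_trans IH1 IH2.
Qed.
End PresMap.

(* The ordinary colimit (in the category of small groupoids) of a diagram D   *)
(* restricted to the subposet {i | P i}.  Objects: the colimit of the object  *)
(* sets (quotient of the disjoint union by (i,x) ~ (j, Phi_{ij} x)).          *)
(* Morphisms: composable words in the morphisms of the Phi(i), modulo the     *)
(* composition/identity relations of each Phi(i), the identifications         *)
(* f ~ Phi_{ij}(f), and the equality of morphisms of each Phi(i).             *)
Section Colim.
Variables (I : Type) (le : I -> I -> bool) (D : Diagram le) (P : pred I).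

Record cpt := CPt { cidx : I; cin : P cidx; cobj : D cidx }.

Definition cRel (a b : cpt) : Prop :=
  exists h : le (cidx a) (cidx b), cobj b = dmap D h (cobj a).

Definition cO := quot cRel.

Record cedge := CEdge { eidx : I; ein : P eidx; esrc : D eidx; etgt : D eidx;
                        emor : hom esrc etgt }.

Definition csrc (e : cedge) : cO := qcls cRel (@CPt (eidx e) (ein e) (esrc e)).
Definition ctgt (e : cedge) : cO := qcls cRel (@CPt (eidx e) (ein e) (etgt e)).
Definition clinv (e : cedge) : cedge := @CEdge (eidx e) (ein e) _ _ (ginv (emor e)).

Inductive cB : seq cedge -> seq cedge -> Prop :=
| cb_comp i (p : P i) (x y z : D i) (f : hom x y) (g : hom y z) :
    cB [:: @CEdge i p x y f; @CEdge i p y z g] [:: @CEdge i p x z (gcomp f g)]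
| cb_id i (p : P i) (x : D i) : cB [:: @CEdge i p x x (gid x)] [::]
| cb_map i j (p : P i) (q : P j) (h : le i j) (x y : D i) (f : hom x y) :
    cB [:: @CEdge i p x y f] [:: @CEdge j q _ _ (fmor (dmap D h) f)]
| cb_geq i (p : P i) (x y : D i) (f g : hom x y) :
    geq f g -> cB [:: @CEdge i p x y f] [:: @CEdge i p x y g].

Definition colim : Gpd :=
  @PGpd cO cedge csrc ctgt clinv (fun e => erefl) (fun e => erefl) cB.

(* The object part of the canonical functor colim_{P} Phi -> Phi(v), induced  *)
(* by the functors Phi_{i,v} (for an upper bound v of the subposet).          *)
Variables (v : I) (hPv : forall i, P i -> le i v).

Definition canon_pt (a : cpt) : D v := dmap D (hPv (cin a)) (cobj a).

Definition colim_to_obj (c : cO) : D v :=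
  canon_pt (proj1_sig (constructive_indefinite_description _ (proj2_sig c))).

Lemma canon_pt_clos a b : clos_refl_sym_trans _ cRel a b -> canon_pt a = canon_pt b.
Proof.
elim=> [x y [h Hb]|x|x y _ IH|x y z _ IH1 _ IH2] //.
- by rewrite /canon_pt Hb (@dmap_comp_ob _ _ D _ _ _ h (hPv (cin y)) (hPv (cin x))).
- by rewrite IH1.
Qed.

Lemma colim_to_obj_cls a : colim_to_obj (qcls cRel a) = canon_pt a.
Proof.
rewrite /colim_to_obj; case: constructive_indefinite_description => x /= Ex.
apply: canon_pt_clos; apply: rst_sym; rewrite Ex; exact: rst_refl.
Qed.

End Colim.

(* The 2-colimit: the Grothendieck construction with all morphisms inverted. *)
(* A generator (i,x) -> (j,y) (i <= j) is a morphism Phi_{ij}(x) -> y of      *)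
(* Phi(j); for convenience it is stored with an explicit copy x' of Phi_{ij} x*)
(* (field [gx'], with the equation [ge]).  Letters are generators (true) or   *)
(* formal inverses of generators (false).                                     *)
Section TwoColim.
Variables (I : Type) (le : I -> I -> bool) (D : Diagram le).

Record gmor := GMor { gi : I; gj : I; gh : le gi gj; gx : D gi; gx' : D gj; gy : D gj;
                      gf : hom gx' gy; ge : dmap D gh gx = gx' }.

Definition gO := {i : I & D i}.
Definition gL := (bool * gmor)%type.

Definition gsrc (l : gL) : gO :=
  if l.1 then existT _ (gi l.2) (gx l.2) else existT _ (gj l.2) (gy l.2).
Definition gtgt (l : gL) : gO :=
  if l.1 then existT _ (gj l.2) (gy l.2) else existT _ (gi l.2) (gx l.2).
Definition glinv (l : gL) : gL := (~~ l.1, l.2).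

Lemma gsrc_linv l : gsrc (glinv l) = gtgt l. Proof. by case: l => [[]]. Qed.
Lemma gtgt_linv l : gtgt (glinv l) = gsrc l. Proof. by case: l => [[]]. Qed.

Inductive gB : seq gL -> seq gL -> Prop :=
| gb_id i (h : le i i) (x : D i) (e : dmap D h x = x) :
    gB [:: (true, @GMor i i h x x x (gid x) e)] [::]
| gb_comp i j k (h1 : le i j) (h2 : le j k) (h3 : le i k) (x : D i) (x1 y : D j) (z : D k)
    (f : hom x1 y) (g : hom (dmap D h2 y) z) (e1 : dmap D h1 x = x1)
    (e3 : dmap D h3 x = dmap D h2 x1) :
    gB [:: (true, @GMor i j h1 x x1 y f e1); (true, @GMor j k h2 y _ z g erefl)]
       [:: (true, @GMor i k h3 x _ z (gcomp (fmor (dmap D h2) f) g) e3)]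
| gb_geq (m : gmor) (f' : hom (gx' m) (gy m)) :
    geq (gf m) f' -> gB [:: (true, m)] [:: (true, @GMor _ _ (gh m) _ _ _ f' (ge m))].

Definition twocolim : Gpd := @PGpd gO gL gsrc gtgt glinv gsrc_linv gtgt_linv gB.

Definition Ptrue : pred I := fun _ => true.

Definition delta_ob (a : gO) : cO D Ptrue :=
  qcls (@cRel _ _ D Ptrue) (@CPt _ _ D Ptrue (projT1 a) (erefl true) (projT2 a)).

Definition delta_l (l : gL) : cedge D Ptrue :=
  if l.1 then @CEdge _ _ D Ptrue (gj l.2) (erefl true) _ _ (gf l.2)
  else @CEdge _ _ D Ptrue (gj l.2) (erefl true) _ _ (ginv (gf l.2)).

Lemma delta_x' (m : gmor) :
  delta_ob (existT _ (gi m) (gx m)) = delta_ob (existT _ (gj m) (gx' m)).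
Proof. by apply: qcls_eq; apply: rst_step; exists (gh m); rewrite /= (ge m). Qed.

Lemma delta_src l : delta_ob (gsrc l) = csrc (delta_l l).
Proof. by case: l => [[] m] //=; rewrite delta_x'. Qed.

Lemma delta_tgt l : delta_ob (gtgt l) = ctgt (delta_l l).
Proof. by case: l => [[] m] //=; rewrite delta_x'. Qed.

Lemma delta_weq u w :
  weq glinv gB u w -> weq (@clinv _ _ D Ptrue) (@cB _ _ D Ptrue) (map delta_l u) (map delta_l w).
Proof.
apply: weq_map.
- move=> l r; case=> [i h x e|i j k h1 h2 h3 x x1 y z f g e1 e3|m f' H];
    rewrite /delta_l /=.
  + by apply: weq_B; apply: cb_id.
  + apply: rst_trans; last by apply: weq_B; apply: cb_comp.
    pose H0 := @weq_B _ (@clinv _ _ D Ptrue) _ _ _ (@cb_map _ _ D Ptrue j k (erefl true) (erefl true) h2 _ _ f). pose H1 := weq_catr [:: @CEdge _ _ D Ptrue k (erefl true) _ _ g] H0. exact H1.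
  + by apply: weq_B; apply: cb_geq.
- case=> [[] m] /=; first exact: rst_refl.
  by apply: weq_B; apply: cb_geq; apply: geq_sym; apply: ginvK.
- case=> [[] m] /=.
  + exact: (rst_step _ _ _ _ (ws_cancel_r _ _ [::] (delta_l (true, m)) [::])).
  + exact: (rst_step _ _ _ _ (ws_cancel_l _ _ [::] (delta_l (true, m)) [::])).
- case=> [[] m] /=.
  + exact: (rst_step _ _ _ _ (ws_cancel_l _ _ [::] (delta_l (true, m)) [::])).
  + exact: (rst_step _ _ _ _ (ws_cancel_r _ _ [::] (delta_l (true, m)) [::])).
Qed.

Definition delta : Functor twocolim (colim D Ptrue).
Proof.
refine (@Functor_ twocolim (colim D Ptrue) delta_ob
  (fun a b f => exist _ (map delta_l (sval f))
      (wf_map delta_src delta_tgt (proj2_sig f))) _ _ _).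
- by move=> a b f g /= H; apply: delta_weq.
- by move=> a /=; apply: rst_refl.
- by move=> a b c f g /=; rewrite map_cat; apply: rst_refl.
Defined.

End TwoColim.

(* The poset B([n]) of proper subsets of [n].  We index [n] = {1,..,n} by     *)
(* 'I_n = {0,..,n-1} (element m of [n] is the ordinal m-1).                   *)
Definition Bn (n : nat) := {S : {set 'I_n} | S != [set: 'I_n]}.
Definition Ble (n : nat) (S T : Bn n) : bool := sval S \subset sval T.

(* [k] = {1,..,k}, i.e. the ordinals i < k. *)
Definition setk (n k : nat) : {set 'I_n} := [set i : 'I_n | i < k].

Definition BVU (n : nat) (V U : {set 'I_n}) : pred (Bn n) :=
  fun X => (U \subset sval X) && (sval X \proper V).

Lemma BVU_le (n : nat) (V U : {set 'I_n}) (hV : V != [set: 'I_n]) :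
  forall X : Bn n, BVU V U X -> Ble X (exist _ V hV).
Proof. by move=> X /andP[_ /proper_sub]. Qed.

(* Condition A^V_U: the canonical functor colim_{B(V:U)} Phi -> Phi(V) is     *)
(* injective on objects (only meaningful for V proper, which is assumed).     *)
Definition A_cond (n : nat) (Phi : Diagram (@Ble n)) (V U : {set 'I_n}) : Prop :=
  forall hV : V != [set: 'I_n],
    injective (@colim_to_obj _ _ Phi (BVU V U) (exist _ V hV) (BVU_le hV)).

(* The comparison functor [delta] has a quasi-inverse as soon as the objects
   of the Grothendieck construction are contractible along their cocartesian
   morphisms (i, x) -> (j, Phi_ij x) inside 2colim Phi: every object has a
   zigzag of cocartesian morphisms to a chosen representative of its class in
   the objects of colim Phi, coherently with every cocartesian morphism.  The
   representatives define the quasi-inverse on objects, and a morphism f of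
   some Phi(i) is sent to f conjugated by the chosen zigzags.

   Such a contraction is built over B([m] ∪ U : U), for U above m, by
   induction on m.  The pivot m+1 splits B([m+1] ∪ U : U) into
   B([m] ∪ U : U), the apex [m] ∪ U, and B([m+1] ∪ U : {m+1} ∪ U), whose
   contractions are given by induction.  The lower part is glued to the upper
   one by adding the pivot, and an object over the apex is sent down to a
   preimage in the lower part; condition A^{[m] ∪ U}_U says exactly that all
   such preimages lie in one component, so the glued representative is well
   defined.  For m = n and U = ∅ this is all of B([n]); for m = 0 the lower
   part is empty, and the other instances of A are (A1) and (A2). *)

From HB Require Import structures.
From mathcomp Require Import all_boot zify.
From Stdlib Require Import Relations.Relation_Operators.
From Stdlib Require Import ProofIrrelevance FunctionalExtensionality ClassicalEpsilon.

Set Implicit Arguments. Unset Strict Implicit. Unset Printing Implicit Defensive.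

#[local] Arguments rst_refl {A R x}.
#[local] Arguments rst_sym {A R x y}.
#[local] Arguments rst_trans {A R x y z}.

Lemma htransport_gcompl (G : Gpd) (x x' y z : G) (E : x = x') (f : hom x y) (g : hom y z) :
  htransport E erefl (gcomp f g) = gcomp (htransport E erefl f) g.
Proof. by case: x' / E. Qed.

Lemma htransport_gcomp_mid (G : Gpd) (x x' y y' z : G) (Ex : x = x') (Ey : y = y')
    (f : hom x y) (g : hom y' z) :
  gcomp (htransport Ex erefl f) (htransport (esym Ey) erefl g) =
  gcomp (htransport Ex Ey f) g.
Proof. by case: y' / Ey g => g; case: x' / Ex. Qed.

Section Words.
Variables (L : Type) (linv : L -> L) (B : seq L -> seq L -> Prop).
Local Notation weq := (weq linv B).

Lemma weq_cons l u v : weq u v -> weq (l :: u) (l :: v).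
Proof. exact: (weq_catl [:: l]). Qed.

Lemma weq_cancel_r a : weq [:: a; linv a] [::].
Proof. exact: (rst_step _ _ _ _ (ws_cancel_r _ _ [::] a [::])). Qed.

Lemma weq_cancel_l a : weq [:: linv a; a] [::].
Proof. exact: (rst_step _ _ _ _ (ws_cancel_l _ _ [::] a [::])). Qed.

Lemma weq_cancel_lK a s : weq (linv a :: a :: s) s.
Proof. exact: (weq_catr s (weq_cancel_l a)). Qed.

End Words.
Arguments weq_cancel_r {L linv B}.
Arguments weq_cancel_l {L linv B}.
Arguments weq_cancel_lK {L linv B}.

Section WordSubst.
Variables (L1 L2 : Type) (linv1 : L1 -> L1) (B1 : seq L1 -> seq L1 -> Prop)
  (linv2 : L2 -> L2) (B2 : seq L2 -> seq L2 -> Prop) (F : L1 -> seq L2).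

Definition wsubst (w : seq L1) : seq L2 := flatten (map F w).

Lemma wsubst_cat u v : wsubst (u ++ v) = wsubst u ++ wsubst v.
Proof. by rewrite /wsubst map_cat flatten_cat. Qed.

Hypothesis F_rel : forall l r, B1 l r -> weq linv2 B2 (wsubst l) (wsubst r).
Hypothesis F_linv : forall l, weq linv2 B2 (F (linv1 l)) (winv linv2 (F l)).

Lemma wsubst_winv w : weq linv2 B2 (wsubst (winv linv1 w)) (winv linv2 (wsubst w)).
Proof.
elim: w => [|l w IH]; first exact: rst_refl.
rewrite winv_cons wsubst_cat /= winv_cat /wsubst /= cats0.
exact: weq_cat IH (F_linv l).
Qed.

Lemma weq_wsubst u v : weq linv1 B1 u v -> weq linv2 B2 (wsubst u) (wsubst v).
Proof.
have Fbrel l r : brel linv1 B1 l r -> weq linv2 B2 (wsubst l) (wsubst r).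
  elim=> [l' r' /F_rel //|l' r' _ IH].
  apply: rst_trans (wsubst_winv _) _; apply: rst_trans (weq_inv IH) _.
  exact: rst_sym (wsubst_winv _).
have F_cancel l : weq linv2 B2 (F l ++ F (linv1 l)) [::] /\
                  weq linv2 B2 (F (linv1 l) ++ F l) [::].
  split.
  - apply: rst_trans (weq_catl _ (F_linv l)) _; exact: weq_invr.
  - apply: rst_trans (weq_catr _ (F_linv l)) _; exact: weq_invl.
elim=> [a b H|a|a b _ IH|a b c _ IH1 _ IH2].
- case: H => [u' l r v' H|u' a' v'|u' a' v']; rewrite !wsubst_cat;
    apply: weq_catl.
  + by apply: weq_catr; apply: Fbrel.
  + rewrite -[wsubst v']cat0s; apply: weq_catr.
    by rewrite /wsubst /= cats0; case: (F_cancel a').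
  + rewrite -[wsubst v']cat0s; apply: weq_catr.
    by rewrite /wsubst /= cats0; case: (F_cancel a').
- exact: rst_refl.
- exact: rst_sym.
- exact: rst_trans IH1 IH2.
Qed.

End WordSubst.

(** * Cocartesian and vertical letters of the 2-colimit *)

Section Grothendieck.
Variables (I : Type) (le : I -> I -> bool) (D : Diagram le).
Hypothesis le_refl : forall i, le i i.

Local Notation "u ≡ v" := (weq (@glinv _ _ D) (@gB _ _ D) u v) (at level 70).

Lemma glinvK : involutive (@glinv _ _ D).
Proof. by case=> [[] m]. Qed.

Lemma winvK : involutive (winv (@glinv _ _ D)).
Proof. by move=> w; rewrite /winv map_rev revK -map_comp (eq_map glinvK) map_id. Qed.

Definition cocart_to i j (h : le i j) (x : D i) (y : D j) (e : dmap D h x = y) : gL D :=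
  (true, GMor (gid y) e).

Definition cocart i j (h : le i j) (x : D i) : gL D := cocart_to (erefl (dmap D h x)).

Definition vert i (x y : D i) (f : hom x y) : gL D :=
  (true, GMor f (dmap_id_ob (le_refl i) x)).

Lemma gmor_comp i j k (h1 : le i j) (h2 : le j k) (h3 : le i k) (x : D i) (x1 y : D j)
    (y1 z : D k) (e1 : dmap D h1 x = x1) (e2 : dmap D h2 y = y1)
    (e3 : dmap D h3 x = dmap D h2 x1) (f : hom x1 y) (g : hom y1 z) :
  [:: (true, GMor f e1); (true, GMor g e2)] ≡
  [:: (true, GMor (gcomp (fmor (dmap D h2) f) (htransport (esym e2) erefl g)) e3)].
Proof. by case: y1 / e2 g => g; apply: weq_B; apply: gb_comp. Qed.

Lemma gmor_geq i j (h : le i j) (x : D i) (x1 x2 y : D j) (E : x1 = x2)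
    (e1 : dmap D h x = x1) (e2 : dmap D h x = x2) (f : hom x1 y) (g : hom x2 y) :
  geq (htransport E erefl f) g -> [:: (true, GMor f e1)] ≡ [:: (true, GMor g e2)].
Proof.
case: x2 / E e2 g => e2 g /= fg; rewrite (proof_irrelevance _ e2 e1).
by apply: weq_B; exact: (@gb_geq _ _ D (GMor f e1) g fg).
Qed.
Arguments gmor_geq {i j h x x1 x2 y} E {e1 e2 f g}.

Lemma cocart_comp i j k (h1 : le i j) (h2 : le j k) (h3 : le i k)
    (x : D i) (y : D j) (z : D k)
    (e1 : dmap D h1 x = y) (e2 : dmap D h2 y = z) (e3 : dmap D h3 x = z) :
  [:: cocart_to e1; cocart_to e2] ≡ [:: cocart_to e3].
Proof.
have e3' : dmap D h3 x = dmap D h2 y by rewrite e3 e2.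
apply: rst_trans (gmor_comp e1 e2 e3' (gid y) (gid z)) _.
apply: (gmor_geq e2); rewrite htransport_gcompl htransport_gcomp_mid.
case: z / e2 e3 e3' => e3 e3' /=.
exact: geq_trans (gid_r _) (fmor_id _ _).
Qed.

Lemma cocart_id i (h : le i i) (x y : D i) (e : dmap D h x = y) : [:: cocart_to e] ≡ [::].
Proof.
have Ey : y = x by rewrite -e dmap_id_ob.
by move: e; rewrite Ey => e; apply: weq_B; exact: gb_id.
Qed.

Lemma vert_geq i (x y : D i) (f g : hom x y) : geq f g -> [:: vert f] ≡ [:: vert g].
Proof. by move=> fg; apply: weq_B; exact: (@gb_geq _ _ D (GMor f _) g fg). Qed.

Lemma vert_id i (x : D i) : [:: vert (gid x)] ≡ [::].
Proof. by apply: weq_B; exact: gb_id. Qed.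

Lemma vert_comp i (x y z : D i) (f : hom x y) (g : hom y z) :
  [:: vert f; vert g] ≡ [:: vert (gcomp f g)].
Proof.
apply: rst_trans
  (gmor_comp (dmap_id_ob (le_refl i) x) (dmap_id_ob (le_refl i) y) erefl f g) _.
apply: (gmor_geq (dmap_id_ob (le_refl i) x)).
rewrite htransport_gcompl htransport_gcomp_mid.
by apply: gcomp_geq; [exact: dmap_id_mor | exact: geq_refl].
Qed.

Lemma vert_ginv i (x y : D i) (f : hom x y) : [:: vert (ginv f)] ≡ [:: glinv (vert f)].
Proof.
have -> : [:: vert (ginv f)] = [:: vert (ginv f)] ++ [::] by [].
apply: rst_trans (rst_sym (weq_catl _ (weq_cancel_r (vert f)))) _.
apply: (weq_catr [:: glinv (vert f)] (x := [:: vert (ginv f); vert f]) (y := [::])).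
apply: rst_trans (vert_comp _ _) _.
exact: rst_trans (vert_geq (ginv_l f)) (vert_id y).
Qed.

Lemma vert_cocart i j (h : le i j) (x y : D i) (f : hom x y) :
  [:: vert f; cocart h y] ≡ [:: cocart h x; vert (fmor (dmap D h) f)].
Proof.
have E : dmap D h x = dmap D (le_refl j) (dmap D h x) by rewrite dmap_id_ob.
apply: rst_trans (gmor_comp (h3 := h) _ erefl erefl f (gid _)) _.
apply: rst_trans (rst_sym (gmor_comp erefl _ E (gid _) (fmor (dmap D h) f))).
apply: (gmor_geq E); rewrite htransport_gcompl.
apply: geq_trans (gid_r _) _.
apply: geq_trans (geq_sym (gcomp_geq (fmor_id _ _) (geq_refl _))).
apply: geq_trans (geq_sym (gid_l _)).
by rewrite (proof_irrelevance _ E (esym (dmap_id_ob _ _))); apply: geq_refl.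
Qed.

Lemma cocart_vert i j (h : le i j) (x : D i) (x' y : D j) (e : dmap D h x = x')
    (f : hom x' y) :
  [:: cocart_to e; vert f] ≡ [:: (true, GMor f e)].
Proof.
have E : dmap D h x = dmap D (le_refl j) x' by rewrite dmap_id_ob.
apply: rst_trans (gmor_comp (h3 := h) e _ E (gid _) f) _.
apply: (gmor_geq (dmap_id_ob (le_refl j) x')).
rewrite htransport_gcompl htransport_gcomp_mid.
apply: geq_trans (gid_l _).
by apply: gcomp_geq; [exact: dmap_id_mor | exact: geq_refl].
Qed.

Lemma vert_factor i j (h : le i j) (x : D i) (x' y : D j) (e : dmap D h x = x')
    (f : hom x' y) :
  [:: vert f] ≡ [:: glinv (cocart_to e); (true, GMor f e)].
Proof.
apply: rst_sym; apply: rst_trans (weq_cons _ (rst_sym (cocart_vert e f))) _.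
exact: weq_cancel_lK.
Qed.

(** * Zigzags and contractions *)

Section Zigzag.
Variable Q : pred I.

Inductive zigzag : gO D -> seq (gL D) -> gO D -> Prop :=
| zz_nil a : zigzag a [::] a
| zz_fwd i j (h : le i j) (x : D i) w b : Q i -> Q j ->
    zigzag (existT _ j (dmap D h x)) w b -> zigzag (existT _ i x) (cocart h x :: w) b
| zz_bwd i j (h : le i j) (x : D i) w b : Q i -> Q j ->
    zigzag (existT _ i x) w b -> zigzag (existT _ j (dmap D h x)) (glinv (cocart h x) :: w) b.

Lemma zigzag_wf a w b : zigzag a w b -> wf (@gsrc _ _ D) (@gtgt _ _ D) a w b.
Proof. by elim=> //= *; split. Qed.

Lemma zigzag_cat a u b v c : zigzag a u b -> zigzag b v c -> zigzag a (u ++ v) c.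
Proof.
elim=> //= [i j h x w b' Qi Qj _ IH | i j h x w b' Qi Qj _ IH] bv.
- by apply: zz_fwd => //; apply: IH.
- by apply: zz_bwd => //; apply: IH.
Qed.

Lemma zigzag_winv a w b : zigzag a w b -> zigzag b (winv (@glinv _ _ D) w) a.
Proof.
elim=> [a'|i j h x w' b' Qi Qj _ IH|i j h x w' b' Qi Qj _ IH]; first exact: zz_nil.
- by rewrite winv_cons; apply: zigzag_cat IH _; apply: zz_bwd => //; apply: zz_nil.
- rewrite winv_cons glinvK; apply: zigzag_cat IH _.
  by apply: zz_fwd => //; apply: zz_nil.
Qed.

Lemma zigzag_mem a w b : zigzag a w b -> Q (projT1 a) -> Q (projT1 b).
Proof. by elim=> //= i j h x w' b' Qi Qj _ IH _; apply: IH. Qed.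

Lemma zigzag_invariant (X : Type) (f : gO D -> X) :
  (forall i j (h : le i j) x, Q i -> Q j -> f (existT _ i x) = f (existT _ j (dmap D h x))) ->
  forall a w b, zigzag a w b -> f a = f b.
Proof.
move=> f_cocart a w b; elim=> // [i j h x w' b' Qi Qj _ <-|i j h x w' b' Qi Qj _ <-].
- exact: f_cocart.
- by symmetry; apply: f_cocart.
Qed.

Lemma zigzag_absorb (g : gO D -> seq (gL D)) :
  (forall i j (h : le i j) x, Q i -> Q j ->
     g (existT _ i x) ≡ cocart h x :: g (existT _ j (dmap D h x))) ->
  forall a w b, zigzag a w b -> g a ≡ w ++ g b.
Proof.
move=> g_cocart a w b; elim=> [a'|i j h x w' b' Qi Qj _ IH|i j h x w' b' Qi Qj _ IH].
- exact: rst_refl.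
- exact: rst_trans (g_cocart _ _ h x Qi Qj) (weq_cons _ IH).
- apply: rst_trans (rst_sym (weq_cancel_lK (cocart h x) _)) _.
  exact: weq_cons (rst_trans (rst_sym (g_cocart _ _ h x Qi Qj)) IH).
Qed.

End Zigzag.

Lemma zigzag_sub (P P' : pred I) : subpred P P' ->
  forall a w b, zigzag P a w b -> zigzag P' a w b.
Proof.
move=> PP' a w b; elim=> [a'|i j h x w' b' Pi Pj _ IH|i j h x w' b' Pi Pj _ IH].
- exact: zz_nil.
- by apply: zz_fwd; auto.
- by apply: zz_bwd; auto.
Qed.

(* The cocartesian morphisms over [Q] make every connected component
   contractible in the 2-colimit: [p a] leads from [a] to a chosen
   representative, coherently with every cocartesian morphism. *)
Record contraction (Q : pred I) (rep : gO D -> gO D) (p : gO D -> seq (gL D)) : Prop :=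
  Contraction {
    contr_zigzag : forall a, Q (projT1 a) -> zigzag Q a (p a) (rep a);
    contr_path_rep : forall a, Q (projT1 a) -> p (rep a) ≡ [::];
    contr_rep_cocart : forall i j (h : le i j) x, Q i -> Q j ->
      rep (existT _ i x) = rep (existT _ j (dmap D h x));
    contr_path_cocart : forall i j (h : le i j) x, Q i -> Q j ->
      p (existT _ i x) ≡ cocart h x :: p (existT _ j (dmap D h x)) }.

Lemma contraction_cocart_to Q rep p : contraction Q rep p ->
  forall i j (h : le i j) x y (e : dmap D h x = y), Q i -> Q j ->
  rep (existT _ i x) = rep (existT _ j y) /\
  p (existT _ i x) ≡ cocart_to e :: p (existT _ j y).
Proof.
case=> _ _ rep_cocart path_cocart i j h x y e Qi Qj; case: y / e.
by split; [apply: rep_cocart | apply: path_cocart].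
Qed.

Definition pt_of (Q : pred I) (a : cpt D Q) : gO D := existT _ (cidx a) (cobj a).

Lemma contraction_rep_clos Q rep p : contraction Q rep p ->
  forall a b, clos_refl_sym_trans _ (@cRel _ _ D Q) a b -> rep (pt_of a) = rep (pt_of b).
Proof.
case=> _ _ rep_cocart _ a b.
elim=> [x y [h Ey]|x|x y _ IH|x y z _ IH1 _ IH2] //.
- by rewrite /pt_of Ey; apply: rep_cocart; apply: cin.
- by rewrite IH1.
Qed.

Lemma cocart_to_irr i j (h h' : le i j) (x : D i) (y : D j)
    (e : dmap D h x = y) (e' : dmap D h' x = y) :
  cocart_to e = cocart_to e'.
Proof.
have hh' : h = h' by apply: proof_irrelevance.
by subst h'; rewrite (proof_irrelevance _ e e').
Qed.

Definition cocart_word (a b : gO D) : seq (gL D) :=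
  match excluded_middle_informative
          (exists h : le (projT1 a) (projT1 b), dmap D h (projT2 a) = projT2 b) with
  | left ex => let (h, e) := constructive_indefinite_description _ ex in [:: cocart_to e]
  | right _ => [::]
  end.

Lemma cocart_wordE (a : gO D) j (h : le (projT1 a) j) (y : D j) (e : dmap D h (projT2 a) = y) :
  cocart_word a (existT _ j y) = [:: cocart_to e].
Proof.
rewrite /cocart_word; case: excluded_middle_informative => [ex|nex]; last first.
  by case: nex; exists h.
by case: constructive_indefinite_description => h' e' /=; rewrite (cocart_to_irr e' e).
Qed.

Section UpperBound.
Variables (Q : pred I) (k : I).
Hypothesis le_k : forall i, Q i -> le i k.

Lemma zigzag_image a w b (d : D k) : zigzag Q a w b ->
  (forall h : le (projT1 a) k, dmap D h (projT2 a) = d) ->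
  forall h : le (projT1 b) k, dmap D h (projT2 b) = d.
Proof.
elim=> // [i j h x w' b' Qi Qj _ IH|i j h x w' b' Qi Qj _ IH] /= xd; apply: IH => /= h'.
- by rewrite (dmap_comp_ob h h' (le_k Qi)); apply: xd.
- by rewrite -(dmap_comp_ob h (le_k Qj) h'); apply: xd.
Qed.

Lemma zigzag_cone a w b (d : D k) (ha : le (projT1 a) k) (hb : le (projT1 b) k)
    (ea : dmap D ha (projT2 a) = d) (eb : dmap D hb (projT2 b) = d) :
  zigzag Q a w b -> w ≡ [:: cocart_to ea; glinv (cocart_to eb)].
Proof.
move=> zz; elim: zz ha ea hb eb => [a'|i j h x w' b' Qi Qj _ IH|i j h x w' b' Qi Qj _ IH]
  ha ea hb eb.
- by rewrite (cocart_to_irr ea eb); apply: rst_sym; apply: weq_cancel_r.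
- have ej : dmap D (le_k Qj) (dmap D h x) = d by rewrite (dmap_comp_ob _ _ ha).
  apply: rst_trans (weq_cons _ (IH _ ej _ eb)) _.
  exact: (weq_catr _ (cocart_comp _ _ _)).
- have ei : dmap D (le_k Qi) x = d by rewrite -(dmap_comp_ob h ha) ea.
  apply: rst_trans (weq_cons _ (IH _ ei _ eb)) _.
  apply: rst_trans (weq_cons _ (weq_catr _ (rst_sym (cocart_comp erefl ea ei)))) _.
  exact: weq_cancel_lK.
Qed.

End UpperBound.

(** * The quasi-inverse of delta *)

Section QuasiInverse.
Variables (rep : gO D -> gO D) (p : gO D -> seq (gL D)).
Hypothesis contr : contraction (@Ptrue I) rep p.

Local Notation Pall := (@Ptrue I).
Local Notation "u ≡c v" := (weq (@clinv _ _ D Pall) (@cB _ _ D Pall) u v) (at level 70).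

Definition qinv_ob (c : cO D Pall) : gO D :=
  rep (pt_of (proj1_sig (constructive_indefinite_description _ (proj2_sig c)))).

Lemma qinv_obE a : qinv_ob (qcls (@cRel _ _ D Pall) a) = rep (pt_of a).
Proof.
rewrite /qinv_ob; case: constructive_indefinite_description => x /= Ex.
apply: (contraction_rep_clos contr); apply: rst_sym; rewrite Ex; exact: rst_refl.
Qed.

Lemma qinv_ob_delta a : qinv_ob (delta_ob a) = rep a.
Proof. by rewrite /delta_ob qinv_obE; case: a. Qed.

Definition qinv_edge (e : cedge D Pall) : seq (gL D) :=
  winv (@glinv _ _ D) (p (existT _ (eidx e) (esrc e))) ++
  vert (emor e) :: p (existT _ (eidx e) (etgt e)).

Lemma path_wf a : wf (@gsrc _ _ D) (@gtgt _ _ D) a (p a) (rep a).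
Proof. exact/zigzag_wf/(contr_zigzag contr). Qed.

Lemma qinv_edge_wf e :
  wf (@gsrc _ _ D) (@gtgt _ _ D) (qinv_ob (csrc e)) (qinv_edge e) (qinv_ob (ctgt e)).
Proof.
rewrite /csrc /ctgt !qinv_obE /qinv_edge; apply: wf_cat.
  exact: (wf_inv (@gsrc_linv _ _ D) (@gtgt_linv _ _ D) (path_wf _)).
by split=> //; apply: path_wf.
Qed.

Lemma qinv_word_wf a w b : wf (@csrc _ _ D Pall) (@ctgt _ _ D Pall) a w b ->
  wf (@gsrc _ _ D) (@gtgt _ _ D) (qinv_ob a) (wsubst qinv_edge w) (qinv_ob b).
Proof.
elim: w a => [|e w IH] a /=; first by move->.
by case=> -> H; apply: wf_cat (qinv_edge_wf e) (IH _ H).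
Qed.

Lemma qinv_edge_linv e : qinv_edge (clinv e) ≡ winv (@glinv _ _ D) (qinv_edge e).
Proof.
rewrite /qinv_edge /= winv_cat winv_cons winvK -!catA.
apply: weq_catl; exact: (weq_catr _ (vert_ginv (emor e))).
Qed.

Lemma qinv_edge_rel l r : cB l r -> wsubst qinv_edge l ≡ wsubst qinv_edge r.
Proof.
case=> [i q x y z f g|i q x|i j q q' h x y f|i q x y f g fg];
  rewrite /wsubst /= !cats0 /qinv_edge -?catA.
- apply: weq_catl => /=; rewrite catA.
  apply: rst_trans (weq_cons _ (weq_catr _ (weq_invr _ _ _))) _ => /=.
  exact: (weq_catr _ (vert_comp f g)).
- apply: rst_trans (weq_invl _ _ _); apply: weq_catl.
  exact: (weq_catr _ (vert_id x)).
- have px := contr_path_cocart contr h x erefl erefl.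
  have py := contr_path_cocart contr h y erefl erefl.
  apply: rst_trans (weq_catr _ (weq_inv px)) _; rewrite winv_cons -catA /=.
  apply: weq_catl; apply: rst_trans (weq_cons _ (weq_cons _ py)) _.
  apply: (weq_catr _ (x := [:: glinv (cocart h x); vert f; cocart h y])
                     (y := [:: vert (fmor (dmap D h) f)])).
  apply: rst_trans (weq_cons _ (vert_cocart h f)) _.
  exact: weq_cancel_lK.
- by apply: weq_catl => /=; exact: (weq_catr _ (vert_geq fg)).
Qed.

Definition qinv : Functor (colim D Pall) (twocolim D).
Proof.
refine (@Functor_ (colim D Pall) (twocolim D) qinv_ob
  (fun a b f => exist _ (wsubst qinv_edge (sval f)) (qinv_word_wf (proj2_sig f))) _ _ _).
- move=> a b f g /=; exact: (weq_wsubst qinv_edge_rel qinv_edge_linv).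
- move=> a /=; exact: rst_refl.
- by move=> a b c f g /=; rewrite wsubst_cat; exact: rst_refl.
Defined.

Lemma qinv_delta_letter l :
  qinv_edge (delta_l l) ≡ winv (@glinv _ _ D) (p (gsrc l)) ++ l :: p (gtgt l).
Proof.
case: l => [[] [i j h x x' y f e]]; rewrite /qinv_edge /delta_l /gsrc /gtgt /=.
- have [_ px] := contraction_cocart_to contr e erefl erefl.
  apply: rst_sym; apply: rst_trans (weq_catr _ (weq_inv px)) _.
  rewrite winv_cons -catA; apply: weq_catl => /=.
  apply: (weq_catr _ (x := [:: _; _]) (y := [:: _])); apply: rst_sym; exact: vert_factor.
- have [_ px] := contraction_cocart_to contr e erefl erefl.
  apply: weq_catl; apply: rst_trans (weq_cons _ (rst_sym px)).
  apply: (weq_catr _ (x := [:: _]) (y := [:: _; _])).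
  apply: rst_trans (vert_ginv _) _.
  by have := weq_inv (vert_factor e f); rewrite /winv.
Qed.

Lemma qinv_delta_word a w b : wf (@gsrc _ _ D) (@gtgt _ _ D) a w b ->
  wsubst qinv_edge (map (@delta_l _ _ D) w) ≡ winv (@glinv _ _ D) (p a) ++ w ++ p b.
Proof.
elim: w a => [|l w IH] a /=; first by move->; apply: rst_sym; apply: weq_invl.
case=> -> H; rewrite /wsubst /= -/(wsubst qinv_edge _).
apply: rst_trans (weq_cat (qinv_delta_letter l) (IH _ H)) _.
rewrite -!catA; apply: weq_catl => /=; apply: weq_cons.
by rewrite catA; apply: rst_trans (weq_catr _ (weq_invr _ _ _)) _; exact: rst_refl.
Qed.

Lemma qinv_delta_unit_wf a :
  wf (@gsrc _ _ D) (@gtgt _ _ D) (qinv_ob (delta_ob a)) (winv (@glinv _ _ D) (p a)) a.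
Proof.
by rewrite qinv_ob_delta; exact: (wf_inv (@gsrc_linv _ _ D) (@gtgt_linv _ _ D) (path_wf _)).
Qed.

Lemma qinv_delta_iso : NatIso (Fcomp (delta D) qinv) (Fid (twocolim D)).
Proof.
exists (fun a => exist _ (winv (@glinv _ _ D) (p a)) (qinv_delta_unit_wf a)).
move=> a b [w wfw] /=.
apply: rst_trans (weq_catr _ (qinv_delta_word wfw)) _.
rewrite -!catA; apply: (weq_catl (winv _ (p a))).
rewrite -[X in _ ≡ X]cats0; apply: (weq_catl w); exact: weq_invr.
Qed.

Lemma cO_surj (c : cO D Pall) : exists a, c = qcls (@cRel _ _ D Pall) a.
Proof. by case: c => P [x E]; exists x; subst P. Qed.

Lemma zigzag_clos u w v : zigzag Pall u w v ->
  clos_refl_sym_trans _ (@cRel _ _ D Pall) (@CPt _ _ D Pall (projT1 u) erefl (projT2 u))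
    (@CPt _ _ D Pall (projT1 v) erefl (projT2 v)).
Proof.
elim=> [a|i j h x w' b _ _ _ IH|i j h x w' b _ _ _ IH] /=.
- exact: rst_refl.
- by apply: rst_trans IH; apply: rst_step; exists h.
- by apply: rst_trans IH; apply: rst_sym; apply: rst_step; exists h.
Qed.

Lemma delta_qinv_ob c : delta_ob (qinv_ob c) = c.
Proof.
have [[i q x] ->] := cO_surj c; rewrite qinv_obE /delta_ob.
apply: qcls_eq; apply: rst_sym.
have -> : q = erefl by apply: proof_irrelevance.
exact: (zigzag_clos (contr_zigzag contr (a := existT _ i x) erefl)).
Qed.

Lemma zigzag_delta u w v : zigzag Pall u w v -> map (@delta_l _ _ D) w ≡c [::].
Proof.
elim=> [a|i j h x w' b _ _ _ IH|i j h x w' b _ _ _ IH] /=.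
- exact: rst_refl.
- exact: rst_trans (weq_catr _ (weq_B _ (cb_id _ _))) IH.
- apply: rst_trans (weq_catr _ (weq_B _ (cb_geq _ _))) _; last first.
    exact: rst_trans (weq_catr _ (weq_B _ (cb_id _ _))) IH.
  exact: geq_trans (geq_sym (gid_r _)) (ginv_l _).
Qed.

Lemma delta_qinv_word w : map (@delta_l _ _ D) (wsubst qinv_edge w) ≡c w.
Proof.
elim: w => [|e w IH]; first exact: rst_refl.
rewrite /wsubst /= -/(wsubst qinv_edge _) map_cat -[X in _ ≡c X]/([:: e] ++ w).
apply: weq_cat IH; rewrite /qinv_edge map_cat /=.
have zz a := contr_zigzag contr (a := a) erefl.
rewrite -[X in _ ≡c X]cat0s; apply: weq_cat.
  exact: (zigzag_delta (zigzag_winv (zz _))).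
rewrite -[X in _ ≡c X]cats0 -[X in X ≡c _]/([:: _] ++ _); apply: weq_cat.
  have -> : delta_l (vert (emor e)) = e by case: e => i q x y f; rewrite (eq_irrelevance q erefl).
  exact: rst_refl.
exact: (zigzag_delta (zz _)).
Qed.

Lemma delta_qinv_iso : NatIso (Fcomp qinv (delta D)) (Fid (colim D Pall)).
Proof.
exists (fun c => exist _ [::] (delta_qinv_ob c)).
by move=> a b [w wfw] /=; rewrite cats0; exact: delta_qinv_word.
Qed.

Lemma delta_equiv_of_contraction : IsEquivalence (delta D).
Proof. by exists qinv; split; [exact: qinv_delta_iso | exact: delta_qinv_iso]. Qed.

End QuasiInverse.

End Grothendieck.
Arguments contraction {I le} D Q rep p.

(** * Cubes of subsets *)

Section Cubes.
Variable n : nat.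

Definition cube (m : nat) (U : {set 'I_n}) : pred (Bn n) := BVU (setk n m :|: U) U.

Lemma setkS t (ht : t < n) : setk n t.+1 = Ordinal ht |: setk n t.
Proof. by apply/setP => i; rewrite !inE ltnS leq_eqVlt -val_eqE. Qed.

Lemma setk0 : setk n 0 = set0.
Proof. by apply/setP => i; rewrite !inE. Qed.

Lemma setkn : setk n n = setT.
Proof. by apply/setP => i; rewrite !inE ltn_ord. Qed.

Lemma cube0 U S : cube 0 U S = false.
Proof.
apply/negP; rewrite /cube /BVU setk0 set0U => /andP [US SU].
by move: (proper_sub_trans SU US); rewrite properxx.
Qed.

Lemma cube_full S : cube n set0 S.
Proof. by rewrite /cube /BVU sub0set setU0 setkn properT; exact: (valP S). Qed.

(* The pivot [t] (the element [t + 1] of [[n]]) splits [cube t.+1 U] into a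
   lower part [cube t U], the apex [[t] ∪ U], and an upper part
   [cube t (pivot |: U)]. *)
Section Split.
Variables (t : nat) (ht : t < n) (U : {set 'I_n}).
Hypothesis U_gt : U \subset [set i : 'I_n | t < i].
Local Notation pivot := (Ordinal ht).

Definition apex := setk n t :|: U.

Lemma pivot_notin_apex : pivot \notin apex.
Proof. by rewrite /apex !inE ltnn /=; apply/negP => /(subsetP U_gt); rewrite inE ltnn. Qed.

Lemma cubeSE S : cube t.+1 U S = (U \subset sval S) && (sval S \proper pivot |: apex).
Proof. by rewrite /cube /BVU (setkS ht) /apex setUA. Qed.

Lemma cube_pivotE S :
  cube t (pivot |: U) S = (pivot |: U \subset sval S) && (sval S \proper pivot |: apex).
Proof. by rewrite /cube /BVU /apex setUA [setk n t :|: _]setUC setUA. Qed.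

Lemma cubeS_split S :
  cube t.+1 U S -> [|| cube t U S, sval S == apex | cube t (pivot |: U) S].
Proof.
rewrite cubeSE cube_pivotE => /andP [US Sp].
case pS: (pivot \in sval S); first by rewrite Sp subUset sub1set pS US !orbT.
have S_apex : sval S \subset apex.
  apply/subsetP => i iS; have := subsetP (proper_sub Sp) i iS.
  by rewrite !inE; case/orP => // /eqP ei; move: pS; rewrite -ei iS.
rewrite /cube /BVU US /= -/apex properEneq S_apex andbT.
by case: (sval S == apex).
Qed.

Lemma cubeS_low S : cube t U S -> cube t.+1 U S.
Proof. by rewrite cubeSE => /andP [-> SU] /=; apply: proper_sub_trans SU _; exact: subsetUr. Qed.

Lemma cubeS_high S : cube t (pivot |: U) S -> cube t.+1 U S.
Proof.
by rewrite cubeSE cube_pivotE => /andP [pUS ->]; rewrite andbT (subset_trans (subsetUr _ _) pUS).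
Qed.

Lemma low_sub_apex S : cube t U S -> sval S \subset apex.
Proof. by case/andP => _ /proper_sub. Qed.

Lemma pivot_notin_low S : cube t U S -> pivot \notin sval S.
Proof.
by move/low_sub_apex/subsetP => Sa; apply/negP => /Sa; apply/negP; exact: pivot_notin_apex.
Qed.

Lemma pivot_in_high S : cube t (pivot |: U) S -> pivot \in sval S.
Proof. by rewrite cube_pivotE => /andP [/subsetP pUS _]; apply: pUS; rewrite !inE eqxx. Qed.

Lemma low_witness S : cube t U S -> exists2 i, i \in apex & i \notin pivot |: sval S.
Proof.
case/andP => _ /properP [_ [i ia iS]]; exists i => //.
rewrite !inE negb_or iS andbT; apply/negP => /eqP ei.
by move: ia; rewrite ei; apply/negP; exact: pivot_notin_apex.
Qed.

Definition add_pivot (S : Bn n) : Bn n := insubd S (pivot |: sval S).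

Lemma add_pivotE S : cube t U S -> sval (add_pivot S) = pivot |: sval S.
Proof.
move=> lowS; rewrite /add_pivot val_insubd.
have [i _ iS] := low_witness lowS.
by case: ifP => // /negbFE /eqP full; move: iS; rewrite full inE.
Qed.

Lemma le_add_pivot (S : Bn n) : Ble S (add_pivot S).
Proof. by rewrite /Ble /add_pivot val_insubd; case: ifP => _; [exact: subsetUr | exact: subxx]. Qed.

Lemma add_pivot_high S : cube t U S -> cube t (pivot |: U) (add_pivot S).
Proof.
move=> lowS; rewrite cube_pivotE add_pivotE //; case/andP: (lowS) => US SA.
rewrite setUS //=; apply/properP; split; first by apply: setUS; exact: proper_sub.
by have [i ia iS] := low_witness lowS; exists i => //; rewrite inE ia orbT.
Qed.

Lemma add_pivot_le S T :
  Ble S T -> cube t U S -> cube t (pivot |: U) T -> Ble (add_pivot S) T.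
Proof.
by rewrite /Ble => ST lowS highT; rewrite add_pivotE // subUset sub1set ST pivot_in_high.
Qed.

Lemma le_apex_cubeS (S T : Bn n) : Ble S T -> sval S = apex -> cube t.+1 U T -> sval T = apex.
Proof.
rewrite /Ble cubeSE => ST SA /andP [_ Tp]; rewrite SA in ST.
case pT: (pivot \in sval T).
  have : pivot |: apex \subset sval T by rewrite subUset sub1set pT ST.
  by move/sub_proper_trans/(_ Tp); rewrite properxx.
apply/eqP; rewrite eqEsubset ST andbT; apply/subsetP => i iT.
have := subsetP (proper_sub Tp) i iT; rewrite !inE; case/orP => // /eqP ei.
by move: pT; rewrite -ei iT.
Qed.

Lemma le_high_cubeS S T : Ble S T -> cube t (pivot |: U) S -> cube t.+1 U T ->
  cube t (pivot |: U) T.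
Proof.
move=> ST highS MT; have pT : pivot \in sval T by apply: (subsetP ST); exact: pivot_in_high.
case/or3P: (cubeS_split MT) => // [/pivot_notin_low|/eqP TA].
- by rewrite pT.
- by move: pivot_notin_apex; rewrite -TA pT.
Qed.

End Split.
End Cubes.

(** * Gluing contractions along the apex *)

Section Gluing.
Variables (n : nat) (Phi : Diagram (@Ble n)).
Local Notation "u ≡ v" := (weq (@glinv _ _ Phi) (@gB _ _ Phi) u v) (at level 70).

(* Condition [A_cond] read on representatives of the objects of [colim_Q Phi]. *)
Definition colim_inj_at (Q : pred (Bn n)) (V : {set 'I_n}) : Prop :=
  forall (a e : gO Phi) (qa : Q (projT1 a)) (qe : Q (projT1 e)) (S : Bn n),
  sval S = V -> forall (ha : Ble (projT1 a) S) (he : Ble (projT1 e) S),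
  dmap Phi ha (projT2 a) = dmap Phi he (projT2 e) ->
  clos_refl_sym_trans _ (@cRel _ _ Phi Q) (CPt qa (projT2 a)) (CPt qe (projT2 e)).

Lemma A_cond_colim_inj V U : A_cond Phi V U -> colim_inj_at (BVU V U) V.
Proof.
move=> AVU a e qa qe S SV ha he eae.
have hV : V != setT by rewrite -SV; exact: (valP S).
have ES : S = exist _ V hV by apply: val_inj.
subst S.
apply: qcls_inv; apply: (AVU hV); rewrite !colim_to_obj_cls /canon_pt /=.
by rewrite (proof_irrelevance _ (BVU_le hV qa) ha) (proof_irrelevance _ (BVU_le hV qe) he).
Qed.

Section Step.
Variables (t : nat) (ht : t < n) (U : {set 'I_n}).
Hypothesis U_gt : U \subset [set i : 'I_n | t < i].
Local Notation pivot := (Ordinal ht).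
Local Notation low := (cube t U).
Local Notation high := (cube t (pivot |: U)).
Local Notation mid := (cube t.+1 U).
Local Notation apex := (apex t U).
Variables (rA rB : gO Phi -> gO Phi) (pA pB : gO Phi -> seq (gL Phi)).
Hypothesis contrA : contraction Phi low rA pA.
Hypothesis contrB : contraction Phi high rB pB.
Hypothesis low_inj : colim_inj_at low apex.

Definition pivot_up (a : gO Phi) : gO Phi :=
  existT _ (add_pivot ht (projT1 a)) (dmap Phi (le_add_pivot ht (projT1 a)) (projT2 a)).

Definition up_path (c : gO Phi) : seq (gL Phi) :=
  cocart (le_add_pivot ht (projT1 c)) (projT2 c) :: pB (pivot_up c).

Definition has_low_preimage (a : gO Phi) : Prop :=
  exists e : gO Phi, low (projT1 e) /\
    exists h : Ble (projT1 e) (projT1 a), dmap Phi h (projT2 e) = projT2 a.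

Definition low_preimage (a : gO Phi) : option (gO Phi) :=
  match excluded_middle_informative (has_low_preimage a) with
  | left ex => Some (proj1_sig (constructive_indefinite_description _ ex))
  | right _ => None
  end.

(* Low objects go up through the pivot to the high representative; an apex
   object goes down to the representative of any low preimage (well defined
   by [low_inj]) and then up, and is its own representative if it has none. *)
Definition glued_rep (a : gO Phi) : gO Phi :=
  if low (projT1 a) then rB (pivot_up (rA a))
  else if sval (projT1 a) == apex then
    if low_preimage a is Some e then rB (pivot_up (rA e)) else a
  else rB a.

Definition glued_path (a : gO Phi) : seq (gL Phi) :=
  if low (projT1 a) then pA a ++ up_path (rA a)
  else if sval (projT1 a) == apex then
    if low_preimage a is Some e then
      map (@glinv _ _ Phi) (cocart_word (rA e) a) ++ up_path (rA e)
    else [::]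
  else pB a.

Lemma glued_low a : low (projT1 a) ->
  glued_rep a = rB (pivot_up (rA a)) /\ glued_path a = pA a ++ up_path (rA a).
Proof. by move=> lowa; rewrite /glued_rep /glued_path lowa. Qed.

Lemma glued_high a : high (projT1 a) -> glued_rep a = rB a /\ glued_path a = pB a.
Proof.
move=> higha; have pa := pivot_in_high higha; rewrite /glued_rep /glued_path.
have -> : low (projT1 a) = false by apply/negP => /(pivot_notin_low ht U_gt); rewrite pa.
have -> : (sval (projT1 a) == apex) = false.
  by apply/negP => /eqP aA; move: (pivot_notin_apex ht U_gt); rewrite -aA pa.
by [].
Qed.

Lemma apex_not_low (S : Bn n) : sval S = apex -> low S = false.
Proof. by move=> SA; apply/negP => /andP [_]; rewrite SA properxx. Qed.

Lemma glued_apex a : sval (projT1 a) = apex ->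
  glued_rep a = (if low_preimage a is Some e then rB (pivot_up (rA e)) else a) /\
  glued_path a = (if low_preimage a is Some e then
      map (@glinv _ _ Phi) (cocart_word (rA e) a) ++ up_path (rA e) else [::]).
Proof. by move=> aA; rewrite /glued_rep /glued_path apex_not_low // aA eqxx. Qed.

Lemma low_le_apex (S T : Bn n) : sval T = apex -> low S -> Ble S T.
Proof. by move=> TA lowS; rewrite /Ble TA; exact: low_sub_apex lowS. Qed.

Lemma low_preimage_rep a e : sval (projT1 a) = apex -> low_preimage a = Some e ->
  low (projT1 (rA e)) /\
  exists hc : Ble (projT1 (rA e)) (projT1 a), dmap Phi hc (projT2 (rA e)) = projT2 a.
Proof.
rewrite /low_preimage => aA; case: excluded_middle_informative => // ex [<-].
case: constructive_indefinite_description => e' /= [lowe [h eh]].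
have zz := contr_zigzag contrA lowe; have lowc := zigzag_mem zz lowe.
split=> //; exists (low_le_apex aA lowc).
apply: (zigzag_image (fun S => low_le_apex aA) zz) => h'.
by rewrite (proof_irrelevance _ h' h).
Qed.

Lemma up_path_zigzag c : low (projT1 c) -> zigzag mid c (up_path c) (rB (pivot_up c)).
Proof.
case: c => S x lowS; rewrite /up_path /=.
have highS := add_pivot_high ht U_gt lowS.
apply: zz_fwd; [exact: cubeS_low | exact: cubeS_high |].
exact: (zigzag_sub (@cubeS_high _ _ _ _)
  (contr_zigzag contrB (a := pivot_up (existT _ S x)) highS)).
Qed.

Lemma pivot_up_cocart (i j : Bn n) (h : Ble i j) (x : Phi i) : low i -> low j ->
  exists h' : Ble (add_pivot ht i) (add_pivot ht j),
    dmap Phi h' (dmap Phi (le_add_pivot ht i) x) =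
    dmap Phi (le_add_pivot ht j) (dmap Phi h x).
Proof.
move=> lowi lowj.
have h' : Ble (add_pivot ht i) (add_pivot ht j).
  by rewrite /Ble (add_pivotE ht U_gt lowi) (add_pivotE ht U_gt lowj); apply: setUS.
have h3 : Ble i (add_pivot ht j) by apply: subset_trans h (le_add_pivot ht j).
by exists h'; rewrite (dmap_comp_ob _ _ h3) (dmap_comp_ob _ _ h3).
Qed.

Lemma up_path_cocart (i j : Bn n) (h : Ble i j) (x : Phi i) : low i -> low j ->
  rB (pivot_up (existT _ i x)) = rB (pivot_up (existT _ j (dmap Phi h x))) /\
  up_path (existT _ i x) ≡ cocart h x :: up_path (existT _ j (dmap Phi h x)).
Proof.
move=> lowi lowj; have [h' e'] := pivot_up_cocart h x lowi lowj.
have [rBe pBe] := contraction_cocart_to contrB e' (add_pivot_high ht U_gt lowi)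
  (add_pivot_high ht U_gt lowj).
split=> //; rewrite /up_path /=.
have h3 : Ble i (add_pivot ht j) by apply: subset_trans h (le_add_pivot ht j).
have e3 : dmap Phi h3 x = dmap Phi (le_add_pivot ht j) (dmap Phi h x)
  by rewrite (dmap_comp_ob h (le_add_pivot ht j) h3).
apply: rst_trans (weq_cons _ pBe) _.
apply: rst_trans (weq_catr _ (x := [:: _; _]) (y := [:: cocart_to e3]) (cocart_comp _ _ _)) _.
exact: rst_sym (weq_catr _ (x := [:: _; _]) (y := [:: cocart_to e3]) (cocart_comp _ _ _)).
Qed.

Lemma glued_zigzag a : mid (projT1 a) -> zigzag mid a (glued_path a) (glued_rep a).
Proof.
move=> mida; case/or3P: (cubeS_split ht mida) => [lowa|/eqP aA|higha].
- have [-> ->] := glued_low lowa; have zz := contr_zigzag contrA lowa.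
  apply: zigzag_cat (zigzag_sub (@cubeS_low _ _ ht _) zz) _.
  exact: up_path_zigzag (zigzag_mem zz lowa).
- have [-> ->] := glued_apex aA.
  case E: (low_preimage a) => [e|]; last exact: zz_nil.
  have [lowc [hc ec]] := low_preimage_rep aA E; clear E.
  case: a mida aA hc ec => S y /= midS SA; case: (rA e) lowc => Sc xc lowc /= hc ec.
  rewrite (cocart_wordE (a := existT _ Sc xc) ec) /=; case: y / ec midS => midS.
  apply: zz_bwd; [exact: cubeS_low | exact: midS | exact: up_path_zigzag].
- have [-> ->] := glued_high higha.
  exact: (zigzag_sub (@cubeS_high _ _ _ _) (contr_zigzag contrB higha)).
Qed.

Lemma glued_path_rep a : mid (projT1 a) -> glued_path (glued_rep a) ≡ [::].
Proof.
have path_high b : high (projT1 b) -> glued_path (rB b) ≡ [::].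
  move=> highb; have highr := zigzag_mem (contr_zigzag contrB highb) highb.
  by rewrite (glued_high highr).2; apply: (contr_path_rep contrB).
have path_up c : low (projT1 c) -> glued_path (rB (pivot_up c)) ≡ [::].
  by move=> lowc; apply: path_high; exact: add_pivot_high.
move=> mida; case/or3P: (cubeS_split ht mida) => [lowa|/eqP aA|higha].
- rewrite (glued_low lowa).1; apply: path_up.
  exact: zigzag_mem (contr_zigzag contrA lowa) lowa.
- rewrite (glued_apex aA).1; case E: (low_preimage a) => [e|].
    by apply: path_up; case: (low_preimage_rep aA E).
  by rewrite (glued_apex aA).2 E; exact: rst_refl.
- by rewrite (glued_high higha).1; apply: path_high.
Qed.

Lemma glued_cocart_low (S T : Bn n) (h : Ble S T) (x : Phi S) : low S -> low T ->
  glued_rep (existT _ S x) = glued_rep (existT _ T (dmap Phi h x)) /\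
  glued_path (existT _ S x) ≡ cocart h x :: glued_path (existT _ T (dmap Phi h x)).
Proof.
move=> lowS lowT; have [-> ->] := glued_low (a := existT _ S x) lowS.
have [-> ->] := glued_low (a := existT _ T (dmap Phi h x)) lowT.
rewrite (contr_rep_cocart contrA h x lowS lowT); split=> //.
exact: (weq_catr _ (contr_path_cocart contrA h x lowS lowT)).
Qed.

Lemma glued_cocart_low_apex (S T : Bn n) (h : Ble S T) (x : Phi S) :
  low S -> sval T = apex ->
  glued_rep (existT _ S x) = glued_rep (existT _ T (dmap Phi h x)) /\
  glued_path (existT _ S x) ≡ cocart h x :: glued_path (existT _ T (dmap Phi h x)).
Proof.
move=> lowS TA; have [-> ->] := glued_low (a := existT _ S x) lowS.
have [-> ->] := glued_apex (a := existT _ T (dmap Phi h x)) TA.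
case E: (low_preimage _) => [e|]; last first.
  by move: E; rewrite /low_preimage; case: excluded_middle_informative => // [[]];
    exists (existT _ S x); split=> //; exists h.
have [lowc [hc ec]] := low_preimage_rep (a := existT _ T (dmap Phi h x)) TA E.
have rAe : rA (existT _ S x) = rA e.
  move: E; rewrite /low_preimage; case: excluded_middle_informative => // ex [<-].
  case: constructive_indefinite_description => [[Se xe]] /= [lowe [he ee]].
  apply: (contraction_rep_clos contrA (a := CPt lowS x) (b := CPt lowe xe)).
  exact: (low_inj (a := existT _ S x) (e := existT _ Se xe) lowS lowe TA (esym ee)).
rewrite -rAe in lowc hc ec *; split=> //.
rewrite (cocart_wordE ec) /=.
apply: (weq_catr _ (y := [:: cocart h x; glinv (cocart_to ec)])).
exact: (zigzag_cone (fun S => low_le_apex TA) (a := existT _ S x) (erefl (dmap Phi h x)) ec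
                    (contr_zigzag contrA (a := existT _ S x) lowS)).
Qed.

Lemma glued_cocart_low_high (S T : Bn n) (h : Ble S T) (x : Phi S) : low S -> high T ->
  glued_rep (existT _ S x) = glued_rep (existT _ T (dmap Phi h x)) /\
  glued_path (existT _ S x) ≡ cocart h x :: glued_path (existT _ T (dmap Phi h x)).
Proof.
move=> lowS highT; have [-> ->] := glued_low (a := existT _ S x) lowS.
have [-> ->] := glued_high (a := existT _ T (dmap Phi h x)) highT.
have hu := add_pivot_le U_gt h lowS highT.
have eu : dmap Phi hu (dmap Phi (le_add_pivot ht S) x) = dmap Phi h x.
  exact: dmap_comp_ob.
have [rBu pBu] := contraction_cocart_to contrB eu (add_pivot_high ht U_gt lowS) highT.
have zz := contr_zigzag contrA (a := existT _ S x) lowS.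
split.
  rewrite -rBu; symmetry; apply: (zigzag_invariant (f := rB \o pivot_up) _ zz).
  by move=> i j h' x' lowi lowj; case: (up_path_cocart h' x' lowi lowj).
apply: rst_trans (rst_sym (zigzag_absorb (g := up_path) _ zz)) _.
  by move=> i j h' x' lowi lowj; case: (up_path_cocart h' x' lowi lowj).
apply: rst_trans (weq_cons _ pBu) _.
exact: (weq_catr _ (x := [:: _; _]) (y := [:: cocart h x]) (cocart_comp _ _ _)).
Qed.

Lemma glued_cocart (S T : Bn n) (h : Ble S T) (x : Phi S) : mid S -> mid T ->
  glued_rep (existT _ S x) = glued_rep (existT _ T (dmap Phi h x)) /\
  glued_path (existT _ S x) ≡ cocart h x :: glued_path (existT _ T (dmap Phi h x)).
Proof.
move=> midS midT; case/or3P: (cubeS_split ht midS) => [lowS|/eqP SA|highS].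
- case/or3P: (cubeS_split ht midT) => [lowT|/eqP TA|highT].
  + exact: glued_cocart_low.
  + exact: glued_cocart_low_apex.
  + exact: glued_cocart_low_high.
- have TA := le_apex_cubeS ht h SA midT.
  have ST : S = T by apply: val_inj; exact: etrans SA (esym TA).
  subst T; rewrite dmap_id_ob; split=> //.
  exact: (weq_catr _ (x := [::]) (y := [:: cocart h x]) (rst_sym (cocart_id _))).
- have highT := le_high_cubeS U_gt h highS midT.
  have [-> ->] := glued_high (a := existT _ S x) highS.
  have [-> ->] := glued_high (a := existT _ T (dmap Phi h x)) highT.
  split; [exact: (contr_rep_cocart contrB) | exact: (contr_path_cocart contrB)].
Qed.

Lemma glued_contraction : contraction Phi mid glued_rep glued_path.
Proof.
split; [exact: glued_zigzag | exact: glued_path_rep | |].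
- by move=> i j h x midi midj; case: (glued_cocart h x midi midj).
- by move=> i j h x midi midj; case: (glued_cocart h x midi midj).
Qed.

End Step.

Lemma cube_contraction :
  (forall t (ht : t < n) (U : {set 'I_n}), U \subset [set i : 'I_n | t < i] ->
     colim_inj_at (cube t U) (apex t U)) ->
  forall m, m <= n -> forall U : {set 'I_n}, U \subset [set i : 'I_n | m <= i] ->
  exists rep p, contraction Phi (cube m U) rep p.
Proof.
move=> inj; elim=> [|t IH] ltn U U_ge.
  by exists id, (fun _ => [::]); split=> [a|a|i j h x|i j h x]; rewrite cube0.
have ht : t < n := ltn.
have U_ge' : U \subset [set i : 'I_n | t <= i].
  by apply: subset_trans U_ge _; apply/subsetP => i; rewrite !inE; exact: ltnW.
have pU_ge : Ordinal ht |: U \subset [set i : 'I_n | t <= i].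
  by rewrite subUset U_ge' andbT sub1set inE.
have [rA [pA contrA]] := IH (ltnW ltn) U U_ge'.
have [rB [pB contrB]] := IH (ltnW ltn) _ pU_ge.
by do 2!eexists; exact: (glued_contraction U_ge contrA contrB (inj t ht U U_ge)).
Qed.

End Gluing.

Theorem theorem2p1 (n : nat) (Phi : Diagram (@Ble n)) :
  2 <= n ->
  (forall k : nat, 1 <= k <= n - 1 -> A_cond Phi (setk n k) set0) ->
  (forall (k : nat) (U : {set 'I_n}),
      1 <= k <= n - 2 -> U \subset [set i : 'I_n | k < i] ->
      A_cond Phi (setk n k :|: U) U) ->
  IsEquivalence (delta Phi).
Proof.
move=> _ A1 A2.
have inj t (ht : t < n) (U : {set 'I_n}) : U \subset [set i : 'I_n | t < i] ->
    colim_inj_at Phi (cube t U) (apex t U).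
  case: t ht => [|t] ht U_gt; first by move=> a e qa; exfalso; move: qa; rewrite cube0.
  apply: A_cond_colim_inj; have [->|[i iU]] := set_0Vmem U.
    by rewrite setU0; apply: A1; lia.
  by apply: A2 => //; have := subsetP U_gt i iU; rewrite inE; have := ltn_ord i; lia.
have [rep [p contr]] := cube_contraction inj (leqnn n) (sub0set [set i : 'I_n | n <= i]).
have full : cube n set0 = @Ptrue (Bn n) by apply: functional_extensionality; exact: cube_full.
rewrite full in contr.
exact: (delta_equiv_of_contraction (fun S : Bn n => subxx (sval S)) contr).
Qed.
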